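(* Consider the model, design and estimator described in the context. For any $r,\ell\ge0$, $i,i'\in U$ and $t,t'\in[T]$, \[{\rm Cov}\big(\widehat\Delta^r_{it},\widehat\Delta^r_{i't'}\big)\le\frac{4(1+\sigma^2)}{p^r_{it}\,p^r_{i't'}}.\]
   Context: Model. There are $N$ individuals forming the vertex set $U$ ($|U|=N$) of an undirected interference graph $G=(U,E)$, and $T$ rounds $[T]=\{1,\dots,T\}$. For $i\in U$ let $\mathcal N(i)=\{i\}\cup\{j\in U:(i,j)\in E\}$. A treatment matrix $W\in\{0,1\}^{N\times T}$ is drawn at the beginning, independently of all other randomness. Each individual $i$ has a state $S_{it}$ in a state space $\mathcal S$; conditionally on $W$ the states evolve as Markov chains with $S_{i,t+1}\sim P_{it}^{W_{\mathcal N(i),t}}(\cdot\mid S_{it})$. Observed outcomes are $Y_{it}=\mu_{it}(S_{it},W_{\mathcal N(i),t})+\epsilon_{it}$, where $\mu_{it}:\mathcal S\times\{0,1\}^{\mathcal N(i)}\to[0,1]$. Uncorrelated noise: there is a constant $\sigma$ such that, with $S=(S_{it})$, $\mathbb E[\epsilon_{it}\mid S,W]=0$ and $\mathbb E[\epsilon_{it}\epsilon_{i't'}\mid S,W]\le\sigma^2\mathbbm 1(i=i',t=t')$. A fixed parameter $\delta\in[0,1)$ is used in the exposure mapping. Design (clustered switchback): $\Pi$ is a partition of $U$ into clusters; $[T]$ is partitioned into consecutive time blocks of length $\ell$ (the last possibly shorter); for each cluster $C\in\Pi$ and block $B$, independently $A_{CB}\sim{\rm Ber}(1/2)$, and $W_{it}=A_{CB}$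 for $(i,t)\in C\times B$. Estimator: $X^r_{ita}(W)=\prod_{t'=t-r}^{t}\mathbbm 1\Big(\frac{\sum_{i'\in\mathcal N(i)}\mathbbm 1(W_{i't'}=a)}{|\mathcal N(i)|}\ge1-\delta\Big)$, $p^r_{ita}=\mathbb P[X^r_{ita}=1]$; since treatment and control are equally likely, $p^r_{it0}=p^r_{it1}$, and this common value is denoted $p^r_{it}$. $\widehat\Delta^r_{it}=\frac{X^r_{it1}}{p^r_{it1}}Y_{it}-\frac{X^r_{it0}}{p^r_{it0}}Y_{it}$. *)

From HB Require Import structures.
From mathcomp Require Import all_boot all_order all_algebra.
From mathcomp Require Import all_classical all_reals all_analysis.
Set Implicit Arguments. Unset Strict Implicit. Unset Printing Implicit Defensive.
Import Order.TTheory GRing.Theory Num.Theory.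
Local Open Scope classical_set_scope.
Local Open Scope ring_scope.

(* Rounds are indexed 0-based: t : nat with t < T stands for round t+1 of [T]. *)

Definition nbhd {U : finType} (E : rel U) (i : U) : {set U} :=
  [set j | (j == i) || E i j].

(* restriction of a treatment vector to N(i) (values outside N(i) erased),
   so a function of [restr E i w] is a function of w_{N(i)} *)
Definition restr {U : finType} (E : rel U) (i : U) (w : U -> bool) : U -> bool :=
  fun j => if j \in nbhd E i then w j else false.

Definition frac {R : realType} {U : finType} (E : rel U) (i : U)
  (w : U -> nat -> bool) (t' : nat) (a : bool) : R :=
  #|[set j in nbhd E i | w j t' == a]|%:R / #|nbhd E i|%:R.

(* exposure indicator X^r_{ita}(W): product over t' = t-r .. t
   (rounds before the first one are dropped: nat subtraction truncates at 0) *)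
Definition expo {R : realType} {U : finType} (E : rel U) (delta : R) (r : nat)
  (i : U) (t : nat) (a : bool) (w : U -> nat -> bool) : R :=
  \prod_(t - r <= t' < t.+1) (if 1 - delta <= frac E i w t' a then 1 else 0).

Definition pexpo {R : realType} {d : measure_display} {Omega : measurableType d}
  (P : probability Omega R) {U : finType} (E : rel U) (delta : R) (r : nat)
  (W : Omega -> U -> nat -> bool) (i : U) (t : nat) (a : bool) : R :=
  fine (P [set om | expo E delta r i t a (W om) = 1]).

Definition outcome {R : realType} {d : measure_display} {Omega : measurableType d}
  {dS : measure_display} {St : measurableType dS} {U : finType} (E : rel U)
  (mu : U -> nat -> St -> (U -> bool) -> R)
  (W : Omega -> U -> nat -> bool) (S : Omega -> U -> nat -> St)
  (eps : Omega -> U -> nat -> R) (i : U) (t : nat) : Omega -> R :=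
  fun om => mu i t (S om i t) (restr E i (fun j => W om j t)) + eps om i t.

Definition Dhat {R : realType} {d : measure_display} {Omega : measurableType d}
  (P : probability Omega R)
  {dS : measure_display} {St : measurableType dS} {U : finType} (E : rel U)
  (delta : R) (r : nat) (mu : U -> nat -> St -> (U -> bool) -> R)
  (W : Omega -> U -> nat -> bool) (S : Omega -> U -> nat -> St)
  (eps : Omega -> U -> nat -> R) (i : U) (t : nat) : Omega -> R :=
  fun om =>
    expo E delta r i t true (W om) / pexpo P E delta r W i t true
      * outcome E mu W S eps i t om
    - expo E delta r i t false (W om) / pexpo P E delta r W i t false
      * outcome E mu W S eps i t om.

Definition sigmaW {d : measure_display} {Omega : measurableType d} {U : finType}
  (T : nat) (W : Omega -> U -> nat -> bool) : set (set Omega) :=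
  <<s [set F | exists j t', (t' < T)%N /\ F = [set om | W om j t']] >>.

Definition sigmaWS {d : measure_display} {Omega : measurableType d}
  {dS : measure_display} {St : measurableType dS} {U : finType}
  (T : nat) (W : Omega -> U -> nat -> bool) (S : Omega -> U -> nat -> St)
  (u : nat) : set (set Omega) :=
  <<s [set F | (exists j t', (t' < T)%N /\ F = [set om | W om j t'])
            \/ (exists j t' (A : set St), (t' <= u)%N /\ measurable A /\
                  F = [set om | S om j t' \in A])] >>.

Definition sigmaS0 {d : measure_display} {Omega : measurableType d}
  {dS : measure_display} {St : measurableType dS} {U : finType}
  (S : Omega -> U -> nat -> St) : set (set Omega) :=
  <<s [set F | exists j (A : set St), measurable A /\
                  F = [set om | S om j 0%N \in A]] >>.

Definition nblocks (l T : nat) : nat := size (undup [seq (t %/ l)%N | t <- iota 0 T]).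

From Pilot Require Import Defs.
From mathcomp Require Import all_boot all_order all_algebra.
From mathcomp Require Import all_classical all_reals all_analysis.
From mathcomp Require Import measurable_realfun lra.
Import Order.TTheory GRing.Theory Num.Theory.
Local Open Scope classical_set_scope.
Local Open Scope ring_scope.

Set Implicit Arguments.
Unset Strict Implicit.
Unset Printing Implicit Defensive.

(* Under the clustered switchback design every feasible assignment of the
   cluster/block coins is equally likely, so flipping all coins preserves the
   law of W; since it exchanges exposure to treatment and exposure to control,
   p^r_{it0} = p^r_{it1} =: p and Dhat^r_{it} = (X^r_{it1} - X^r_{it0}) Y_{it} / p.
   The exposures and mu lie in [0, 1], so Dhat^2 <= 2 (1 + eps^2) / p^2 and
   E[Dhat^2] <= 2 (1 + sigma^2) / p^2.  Cauchy-Schwarz for the covariance then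
   gives the bound, even with 2 in place of 4. *)

Lemma sqr_diff_mul_le (R : realFieldType) (x1 x0 m e : R) :
  0 <= x1 <= 1 -> 0 <= x0 <= 1 -> 0 <= m <= 1 ->
  ((x1 - x0) * (m + e)) ^+ 2 <= 2 * (1 + e ^+ 2).
Proof.
move=> /andP[x10 x11] /andP[x00 x01] /andP[m0 m1].
have diff_sqr_le1 : (x1 - x0) ^+ 2 <= 1 by nra.
have sum_sqr_le : (m + e) ^+ 2 <= 2 * (1 + e ^+ 2).
  by have := sqr_ge0 (e - m); nra.
rewrite exprMn; apply: le_trans (ler_piMl _ diff_sqr_le1) sum_sqr_le.
exact: sqr_ge0.
Qed.

Lemma sqrt_div_sqr_mul (R : rcfType) (c p q : R) : 0 <= c -> 0 <= p -> 0 <= q ->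
  Num.sqrt (c / p ^+ 2) * Num.sqrt (c / q ^+ 2) = c / (p * q).
Proof.
move=> c0 p0 q0; rewrite -sqrtrM ?divr_ge0 ?sqr_ge0 //.
rewrite mulrACA -expr2 -invfM -exprMn -exprVn -exprMn sqrtr_sqr ger0_norm //.
by rewrite divr_ge0 ?mulr_ge0.
Qed.

Section Moments.
Local Open Scope ereal_scope.
Variables (R : realType) (d : measure_display) (T : measurableType d).
Variable P : probability T R.

Lemma Lfun2_of_sqr_expectation (f : T -> R) :
  measurable_fun setT f -> 'E_P[f ^+ 2] < +oo -> f \in Lfun P 2%:E.
Proof.
move=> mf fin; rewrite inE; apply/andP; split; first by rewrite inE.
rewrite inE /= /finite_norm unlock /Lnorm; apply: poweR_lty.
move: fin; rewrite unlock; congr (_ < _); apply: eq_integral => x _ /=.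
by rewrite (powR_mulrn 2 (normr_ge0 _)) real_normK ?num_real.
Qed.

Lemma variance_le_sqr_expectation (X : T -> R) :
  X \in Lfun P 2%:E -> 'V_P[X] <= 'E_P[X ^+ 2].
Proof.
move=> X2; rewrite varianceE //.
by apply: le_trans (leeB (lexx _) (sqre_ge0 _)) _; rewrite sube0.
Qed.

Lemma covariance_le_sqrt_sqr_expectation (X Y : T -> R) (a b : R) :
  X \in Lfun P 2%:E -> Y \in Lfun P 2%:E ->
  'E_P[X ^+ 2] <= a%:E -> 'E_P[Y ^+ 2] <= b%:E ->
  covariance P X Y <= (Num.sqrt a * Num.sqrt b)%:E.
Proof.
move=> X2 Y2 Xa Yb; apply: le_trans (covariance_le X2 Y2) _.
have sqrte_le (Z : T -> R) c : Z \in Lfun P 2%:E -> 'E_P[Z ^+ 2] <= c%:E ->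
    sqrte 'V_P[Z] <= (Num.sqrt c)%:E.
  move=> Z2 /(le_trans (variance_le_sqr_expectation Z2)) Vc.
  have c0 : 0 <= c%:E := le_trans (variance_ge0 _ _) Vc.
  by rewrite -[X in _ <= X]/(sqrte c%:E) lee_sqrt.
by rewrite EFinM; apply: lee_pmul; rewrite ?sqrte_ge0 //; exact: sqrte_le.
Qed.

Lemma expectation_le_affine (f g : T -> R) (a b c : R) :
  measurable_fun setT f -> measurable_fun setT g ->
  (forall x, 0 <= f x)%R -> (forall x, 0 <= g x)%R -> (0 <= a)%R -> (0 <= b)%R ->
  (forall x, f x <= a + b * g x)%R -> 'E_P[g] <= c%:E ->
  'E_P[f] <= (a + b * c)%:E.
Proof.
move=> mf mg f0 g0 a0 b0 fle gc.
have mlin : measurable_fun setT (fun x => a + b * g x)%R.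
  by apply: measurable_funD => //; apply: measurable_funM.
apply: le_trans (expectation_le mf mlin f0 _ (aeW _ fle)) _.
  by move=> x; rewrite addr_ge0 ?mulr_ge0.
rewrite unlock EFinD; under eq_integral => x _ do rewrite EFinD EFinM.
rewrite ge0_integralD //; first last.
- by apply/measurable_EFinP; apply: measurable_funM.
- by move=> x _; rewrite mule_ge0 ?lee_fin.
rewrite integral_cst // [X in _ * X + _](_ : _ = 1); last exact: probability_setT.
rewrite mule1 leeD2l // ge0_integralZl_EFin //.
- by rewrite EFinM; apply: lee_wpmul2l; rewrite ?lee_fin //; move: gc; rewrite unlock.
- by move=> x _; rewrite lee_fin.
- exact/measurable_EFinP.
Qed.

End Moments.

Section Exposure.
Variables (R : realType) (U : finType) (E : rel U) (delta : R) (r : nat).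

Lemma expo_ext i t a (w w' : U -> nat -> bool) :
  (forall j t', (t' <= t)%N -> w j t' = w' j t') ->
  expo E delta r i t a w = expo E delta r i t a w'.
Proof.
move=> ww'; apply: eq_big_nat => t' /andP[_ t't]; rewrite /Defs.frac.
by congr (if _ <= _%:R / _ then _ else _); apply: eq_card => j; rewrite !inE ww'.
Qed.

Lemma expo_negb i t a (w : U -> nat -> bool) :
  expo E delta r i t a (fun j t' => ~~ w j t') = expo E delta r i t (~~ a) w.
Proof.
apply: eq_bigr => t' _; rewrite /Defs.frac.
by congr (if _ <= _%:R / _ then _ else _); apply: eq_card => j;
  rewrite !inE; case: (w j t'); case: a.
Qed.

Lemma expo_ge0_le1 i t a (w : U -> nat -> bool) :
  0 <= expo E delta r i t a w <= 1.
Proof.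
apply: (big_ind (fun x : R => 0 <= x <= 1)); first by rewrite ler01 lexx.
  by move=> x y /andP[x0 x1] /andP[y0 y1]; rewrite mulr_ge0 ?mulr_ile1.
by move=> t' _; case: ifP; rewrite ?lexx ?ler01.
Qed.

End Exposure.

Lemma measure_preimage_bij (d : measure_display) (T : measurableType d)
    (R : realType) (mu : {measure set T -> \bar R}) (G : finType)
    (pi : T -> G) (f : G -> G) (B : set G) :
  bijective f -> (forall g, measurable (pi @^-1` [set g])) ->
  (forall g, mu (pi @^-1` [set f g]) = mu (pi @^-1` [set g])) ->
  mu (pi @^-1` (f @^-1` B)) = mu (pi @^-1` B).
Proof.
move=> bij_f mfib mu_f.
have fibersE (C : set G) :
    mu (pi @^-1` C) = (\sum_(g \in C) mu (pi @^-1` [set g]))%E.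
  have -> : pi @^-1` C = \bigcup_(g in C) pi @^-1` [set g].
    by apply/seteqP; split => [x Cx | x [g Cg /= ->]] //; exists (pi x).
  rewrite measure_fin_bigcup //; first exact: finite_finset.
  by move=> g g' _ _ [x [/= <- <-]].
have bij_fB : set_bij (f @^-1` B) B f.
  case: bij_f => h fK hK; split => [x // | x y _ _ /(can_inj fK) // | y By].
  by exists (h y); rewrite /= hK.
rewrite !fibersE (reindex_fsbig f (f @^-1` B) B) //.
by apply: eq_fsbigr => g _; rewrite mu_f.
Qed.

Lemma pexpo_ge0 (R : realType) (d : measure_display) (Omega : measurableType d)
    (P : probability Omega R) (U : finType) (E : rel U) (delta : R) r
    (W : Omega -> U -> nat -> bool) i t a :
  0 <= pexpo P E delta r W i t a.
Proof. exact/fine_ge0/measure_ge0. Qed.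

Section ClusteredSwitchback.
Variables (R : realType) (d : measure_display) (Omega : measurableType d).
Variable P : probability Omega R.
Variables (U : finType) (Pi : {set {set U}}) (l T : nat).
Variables (A : Omega -> {set U} -> nat -> bool) (W : Omega -> U -> nat -> bool).
Hypothesis HPi : finset.partition Pi [set: U].
Hypothesis HA_meas : forall C b, measurable [set om | A om C b].
Hypothesis HA_law : forall a : {set U} -> nat -> bool,
  P [set om | forall C t, C \in Pi -> (t < T)%N ->
                A om C (t %/ l)%N = a C (t %/ l)%N]
  = ((1 / 2) ^+ (#|Pi| * nblocks l T))%:E.
Hypothesis HW : forall om i t, W om i t = A om (finset.pblock Pi i) (t %/ l)%N.

Local Notation pattern := {ffun {set U} * 'I_T -> bool}.

(* The coins that matter for the rounds 0..T-1, as a finite-valued function of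
   [A om]: on these rounds W factors through it. *)
Definition coin_pattern (a : {set U} -> nat -> bool) : pattern :=
  [ffun x : {set U} * 'I_T => (x.1 \in Pi) && a x.1 (x.2 %/ l)%N].

Definition pattern_treatment (g : pattern) (j : U) (s : nat) : bool :=
  if insub s is Some s' then g (finset.pblock Pi j, s') else false.

Definition flip_pattern (g : pattern) : pattern := [ffun x => (x.1 \in Pi) (+) g x].

Lemma flip_patternK : involutive flip_pattern.
Proof. by move=> g; apply/ffunP => x; rewrite !ffunE addbA addbb. Qed.

Lemma flip_coin_pattern a :
  flip_pattern (coin_pattern a) = coin_pattern (fun C b => ~~ a C b).
Proof. by apply/ffunP => x; rewrite !ffunE; case: (x.1 \in Pi). Qed.

Let pblock_in_Pi j : finset.pblock Pi j \in Pi.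
Proof. by apply: pblock_mem; case/and3P: HPi => /eqP -> _ _; rewrite finset.in_setT. Qed.

Lemma pattern_treatment_flip g j s : (s < T)%N ->
  pattern_treatment (flip_pattern g) j s = ~~ pattern_treatment g j s.
Proof. by move=> sT; rewrite /pattern_treatment insubT ffunE pblock_in_Pi. Qed.

Lemma W_pattern_treatment om j s : (s < T)%N ->
  W om j s = pattern_treatment (coin_pattern (A om)) j s.
Proof. by move=> sT; rewrite /pattern_treatment insubT ffunE pblock_in_Pi HW. Qed.

Lemma measurable_pattern_fiber g :
  measurable [set om | coin_pattern (A om) = g].
Proof.
have -> : [set om | coin_pattern (A om) = g] = \bigcap_(x in [set: {set U} * 'I_T])
    [set om | (x.1 \in Pi) && A om x.1 (x.2 %/ l)%N = g x].
  apply/seteqP; split => [om <- x _ | om gx]; first by rewrite ffunE.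
  by apply/ffunP => x; rewrite ffunE; apply: gx.
apply: fin_bigcap_measurable; first exact: finite_finset.
move=> [C b] _ /=; case: (C \in Pi) => /=; case: (g (C, b)).
- exact: HA_meas.
- rewrite (_ : [set _ | _] = ~` [set om | A om C (b %/ l)%N]); first exact: measurableC.
  by apply/seteqP; split => om /=; case: (A om C _).
- by rewrite (_ : [set _ | _] = set0) //; apply/seteqP; split.
- by rewrite (_ : [set _ | _] = setT) //; apply/seteqP; split.
Qed.

Lemma coin_pattern_fiberE a :
  [set om | coin_pattern (A om) = coin_pattern a] =
  [set om | forall C t, C \in Pi -> (t < T)%N -> A om C (t %/ l)%N = a C (t %/ l)%N].
Proof.
apply/seteqP; split => om /= Aa.
  by move=> C t CPi tT; move/ffunP: Aa => /(_ (C, Ordinal tT)); rewrite !ffunE CPi.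
by apply/ffunP => x; rewrite !ffunE; case: (boolP (x.1 \in Pi)) => //= x1Pi; rewrite Aa ?ltn_ord.
Qed.

Lemma probability_flip_pattern_fiber g :
  P [set om | coin_pattern (A om) = flip_pattern g] =
  P [set om | coin_pattern (A om) = g].
Proof.
(* Feasible patterns all have the probability given by [HA_law];
   infeasible ones have empty fibers. *)
have [[a ->] | g_out] := pselect (exists a, g = coin_pattern a).
  by rewrite flip_coin_pattern !coin_pattern_fiberE (HA_law (fun C b => ~~ a C b)) HA_law.
have fiber0 h : ~ (exists a, h = coin_pattern a) ->
    [set om | coin_pattern (A om) = h] = set0.
  by move=> h_out; apply/seteqP; split => om //= Ah; apply: h_out; exists (A om).
rewrite !fiber0 // => -[a flip_g]; apply: g_out; exists (fun C b => ~~ a C b).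
by rewrite -flip_coin_pattern -flip_g flip_patternK.
Qed.

Lemma pexpo_false_true (E : rel U) (delta : R) r i s : (s < T)%N ->
  pexpo P E delta r W i s false = pexpo P E delta r W i s true.
Proof.
move=> sT; rewrite /pexpo; congr fine.
pose pi om := coin_pattern (A om).
pose B := [set g | expo E delta r i s true (pattern_treatment g) = 1].
have expoW a om :
    expo E delta r i s a (W om) = expo E delta r i s a (pattern_treatment (pi om)).
  by apply: expo_ext => j s' s's; apply: W_pattern_treatment; exact: leq_ltn_trans s's sT.
have expo_flip a g : expo E delta r i s a (pattern_treatment (flip_pattern g)) =
    expo E delta r i s (~~ a) (pattern_treatment g).
  rewrite -expo_negb; apply: expo_ext => j s' s's.
  by apply: pattern_treatment_flip; exact: leq_ltn_trans s's sT.
have -> : [set om | expo E delta r i s false (W om) = 1] =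
    pi @^-1` (flip_pattern @^-1` B).
  by apply/seteqP; split => om; rewrite /preimage /B /= expoW expo_flip.
have -> : [set om | expo E delta r i s true (W om) = 1] = pi @^-1` B.
  by apply/seteqP; split => om; rewrite /preimage /B /= expoW.
apply: measure_preimage_bij.
- by exists flip_pattern; exact: flip_patternK.
- exact: measurable_pattern_fiber.
- exact: probability_flip_pattern_fiber.
Qed.

Lemma measurable_fun_of_treatments (F : (U -> nat -> bool) -> Omega -> R) :
  (forall w, measurable_fun setT (F w)) ->
  (forall w w' om, (forall j s, (s < T)%N -> w j s = w' j s) -> F w om = F w' om) ->
  measurable_fun setT (fun om => F (W om) om).
Proof.
move=> mF Fext _ Y mY.
have -> : setT `&` (fun om => F (W om) om) @^-1` Y =
    \bigcup_(g in [set: pattern])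
      ([set om | coin_pattern (A om) = g] `&` (setT `&` F (pattern_treatment g) @^-1` Y)).
  have FW om : F (W om) om = F (pattern_treatment (coin_pattern (A om))) om.
    by apply: Fext => j s; exact: W_pattern_treatment.
  apply/seteqP; split => om /=.
    move=> [_ YF]; exists (coin_pattern (A om)) => //; split => //; split => //.
    by rewrite /preimage /= -FW.
  by move=> [g _ [/= <- [_ YF]]]; split => //; rewrite /preimage /= FW.
apply: fin_bigcup_measurable; first exact: finite_finset.
move=> g _; apply: measurableI; first exact: measurable_pattern_fiber.
exact: mF.
Qed.

Section Estimator.
Variables (E : rel U) (delta : R) (r : nat).
Variables (dS : measure_display) (St : measurableType dS).
Variables (mu : U -> nat -> St -> (U -> bool) -> R) (S : Omega -> U -> nat -> St).
Variables (eps : Omega -> U -> nat -> R) (sigma : R).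
Hypothesis Hmu01 : forall i t s w, 0 <= mu i t s w <= 1.
Hypothesis Hmu_meas : forall i t w, measurable_fun setT (fun s => mu i t s w).
Hypothesis HS_meas : forall i t, measurable_fun setT (fun om => S om i t).
Hypothesis Heps_meas : forall i t, measurable_fun setT (fun om => eps om i t).
Hypothesis Heps_cov : forall i t i' t' F, (t < T)%N -> (t' < T)%N ->
  sigmaWS T W S T F ->
  (\int[P]_(om in F) (eps om i t * eps om i' t')%:E
   <= (sigma ^+ 2 * ((i == i') && (t == t'))%:R)%:E * P F)%E.

Local Notation D i t := (Dhat P E delta r mu W S eps i t).
Local Notation p i t := (pexpo P E delta r W i t true).

Lemma measurable_Dhat i t : (t < T)%N -> measurable_fun setT (D i t).
Proof.
move=> tT; pose F w om :=
  expo E delta r i t true w / p i t *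
    (mu i t (S om i t) (restr E i (fun j => w j t)) + eps om i t)
  - expo E delta r i t false w / pexpo P E delta r W i t false *
    (mu i t (S om i t) (restr E i (fun j => w j t)) + eps om i t).
apply: (measurable_fun_of_treatments (F := F)) => [w | w w' om ww'].
  apply: measurable_funB; apply: measurable_funM => //;
    apply: measurable_funD => //; exact: measurableT_comp (Hmu_meas _ _ _) (HS_meas _ _).
have expo_ww' a : expo E delta r i t a w = expo E delta r i t a w'.
  by apply: expo_ext => j s st; apply: ww'; exact: leq_ltn_trans st tT.
have restr_ww' : restr E i (fun j => w j t) = restr E i (fun j => w' j t).
  by apply: funext => j; rewrite /restr ww'.
by rewrite /F !expo_ww' restr_ww'.
Qed.

Lemma Dhat_sqr_le i t om : (t < T)%N ->
  D i t om ^+ 2 <= 2 * (1 + eps om i t ^+ 2) / p i t ^+ 2.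
Proof.
move=> tT; rewrite /Dhat pexpo_false_true // -!mulrBl mulrAC exprMn exprVn.
apply: ler_wpM2r; first by rewrite invr_ge0 sqr_ge0.
by apply: sqr_diff_mul_le; rewrite ?expo_ge0_le1.
Qed.

Lemma sigmaWS_setT u : sigmaWS T W S u setT.
Proof. by rewrite -(setD0 setT); apply: sigma_algebraCD; exact: sigma_algebra0. Qed.

Lemma sqr_expectation_eps_le i t : (t < T)%N ->
  ('E_P[fun om => (eps om i t ^+ 2)%R] <= (sigma ^+ 2)%:E)%E.
Proof.
move=> tT; have := @Heps_cov i t i t setT tT tT (@sigmaWS_setT T).
by rewrite !eqxx mulr1 probability_setT mule1 unlock.
Qed.

Lemma sqr_expectation_Dhat_le i t : (t < T)%N ->
  ('E_P[D i t ^+ 2] <= (2 * (1 + sigma ^+ 2) / p i t ^+ 2)%:E)%E.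
Proof.
move=> tT; set k := 2 / p i t ^+ 2.
have k_ge0 : 0 <= k by rewrite divr_ge0 ?sqr_ge0.
rewrite exprfctE mulrAC -/k mulrDr mulr1.
apply: (expectation_le_affine (g := fun om => eps om i t ^+ 2)) => //.
- exact/measurable_funX/measurable_Dhat.
- exact/measurable_funX.
- by move=> om; rewrite sqr_ge0.
- by move=> om; rewrite sqr_ge0.
- by move=> om; have := @Dhat_sqr_le i t om tT; rewrite mulrAC -/k mulrDr mulr1.
- exact: sqr_expectation_eps_le.
Qed.

Lemma Dhat_Lfun2 i t : (t < T)%N -> D i t \in Lfun P 2%:E.
Proof.
move=> tT; apply: Lfun2_of_sqr_expectation; first exact: measurable_Dhat.
exact: le_lt_trans (sqr_expectation_Dhat_le i tT) (ltry _).
Qed.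

End Estimator.

End ClusteredSwitchback.

Theorem mainTheorem10
  (R : realType)
  (* probability space *)
  (d : measure_display) (Omega : measurableType d) (P : probability Omega R)
  (* individuals, interference graph, rounds *)
  (U : finType) (E : rel U) (T : nat)
  (* state space *)
  (dS : measure_display) (St : measurableType dS)
  (* transition kernels P_{it}^{w}, mean outcome functions mu_{it} *)
  (K : U -> nat -> (U -> bool) -> R.-pker St ~> St)
  (mu : U -> nat -> St -> (U -> bool) -> R)
  (* design: clusters Pi, block length l, cluster/block coins A *)
  (Pi : {set {set U}}) (l : nat)
  (A : Omega -> {set U} -> nat -> bool)
  (* treatments, states, noise *)
  (W : Omega -> U -> nat -> bool) (S : Omega -> U -> nat -> St)
  (eps : Omega -> U -> nat -> R)
  (sigma delta : R) (r : nat)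
  (* undirected graph *)
  (HE : symmetric E)
  (* mean outcomes in [0,1] and measurable in the state *)
  (Hmu01 : forall i t s w, 0 <= mu i t s w <= 1)
  (Hmu_meas : forall i t w, measurable_fun setT (fun s => mu i t s w))
  (* clustered switchback design *)
  (HPi : finset.partition Pi [set: U])
  (HA_meas : forall C b, measurable [set om | A om C b])
  (HA_law : forall a : {set U} -> nat -> bool,
     P [set om | forall C t, C \in Pi -> (t < T)%N ->
                   A om C (t %/ l)%N = a C (t %/ l)%N]
     = ((1 / 2) ^+ (#|Pi| * nblocks l T))%:E)
  (HW : forall om i t, W om i t = A om (finset.pblock Pi i) (t %/ l)%N)
  (* states: measurable; W independent of the initial states;
     conditionally on W, Markov transitions S_{i,t+1} ~ P_{it}^{W_{N(i),t}}(. | S_{it}) *)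
  (HS_meas : forall i t, measurable_fun setT (fun om => S om i t))
  (HW_indep : forall F G, sigmaW T W F -> sigmaS0 S G ->
     P (F `&` G) = (P F * P G)%E)
  (HMarkov : forall i t (B : set St) (F : set Omega), (t < T)%N ->
     measurable B -> sigmaWS T W S t F ->
     P ([set om | S om i t.+1 \in B] `&` F)
     = (\int[P]_(om in F) K i t (restr E i (fun j => W om j t)) (S om i t) B)%E)
  (* uncorrelated noise: E[eps_{it} | S, W] = 0 and
     E[eps_{it} eps_{i't'} | S, W] <= sigma^2 1(i = i', t = t') *)
  (Heps_meas : forall i t, measurable_fun setT (fun om => eps om i t))
  (Heps_mean : forall i t F, (t < T)%N -> sigmaWS T W S T F ->
     (\int[P]_(om in F) (eps om i t)%:E = 0)%E)
  (Heps_cov : forall i t i' t' F, (t < T)%N -> (t' < T)%N -> sigmaWS T W S T F ->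
     (\int[P]_(om in F) (eps om i t * eps om i' t')%:E
      <= (sigma ^+ 2 * ((i == i') && (t == t'))%:R)%:E * P F)%E)
  (* exposure threshold *)
  (Hdelta : 0 <= delta < 1) :
  forall i i' t t', (t < T)%N -> (t' < T)%N ->
    (covariance P (Dhat P E delta r mu W S eps i t) (Dhat P E delta r mu W S eps i' t')
     <= (4 * (1 + sigma ^+ 2)
          / (pexpo P E delta r W i t true * pexpo P E delta r W i' t' true))%:E)%E.
Proof.
move=> i i' t t' tT t'T.
have L2 := Dhat_Lfun2 HPi HA_meas HA_law HW E delta r
  Hmu01 Hmu_meas HS_meas Heps_meas Heps_cov.
have M2 := sqr_expectation_Dhat_le HPi HA_meas HA_law HW E delta r
  Hmu01 Hmu_meas HS_meas Heps_meas Heps_cov.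
apply: le_trans (covariance_le_sqrt_sqr_expectation (L2 i t tT) (L2 i' t' t'T)
  (M2 i t tT) (M2 i' t' t'T)) _.
have p_ge0 i0 t0 := pexpo_ge0 P E delta r W i0 t0 true.
have c_ge0 : 0 <= 1 + sigma ^+ 2 by rewrite addr_ge0 ?sqr_ge0.
rewrite sqrt_div_sqr_mul ?mulr_ge0 // lee_fin.
apply: ler_wpM2r; first by rewrite invr_ge0 mulr_ge0.
by apply: ler_wpM2r; rewrite ?ler_nat.
Qed.
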